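(* Let $(E,\mathscr{T},\le)$ be a Hausdorff Tychonoff space endowed with either the discrete preorder (i.e. $x\le y$ iff $x=y$) or the indiscrete preorder (i.e. $x\le y$ for all $x,y$). Let $\beta:E\to\beta E$ be the Stone–Čech compactification and $\le_\beta$ the preorder on $\beta E$ with $G(\le_\beta)=\bigcap_{f\in\mathcal{F}}G_{\tilde f}$, where $\mathcal{F}$ is the family of continuous isotone functions $f:E\to[0,1]$ and $\tilde f$ the unique continuous extension of $f\circ\beta^{-1}$ to $\beta E$. Then $(\beta E,\mathscr{T}_\beta,\le_\beta)$ is the Stone–Čech compactification endowed with the discrete preorder (resp. the indiscrete preorder).
   Context: Isotone: $x\le y\Rightarrow f(x)\le f(y)$. $G_f=\{(x,y):f(x)\le f(y)\}$, and $G(\le)$ denotes the graph of a preorder. *)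

From HB Require Import structures.
From mathcomp Require Import all_boot all_order all_algebra.
From mathcomp Require Import all_classical all_reals all_analysis.
Set Implicit Arguments. Unset Strict Implicit. Unset Printing Implicit Defensive.
Import Order.TTheory GRing.Theory Num.Theory numFieldNormedType.Exports.
Local Open Scope classical_set_scope.
Local Open Scope ring_scope.

Definition tychonoff_sp (R : realType) (T : topologicalType) :=
  forall (a : T) (B : set T), closed B -> ~ B a ->
    exists f : T -> R, [/\ continuous f, (forall x, 0 <= f x <= 1),
                           f a = 0 & (forall x, B x -> f x = 1)].

Definition embedding (E K : topologicalType) (b : E -> K) :=
  [/\ continuous b, injective b &
      forall U : set E, open U -> exists V : set K, open V /\ b @^-1` V = U].

Definition stone_cech (E K : topologicalType) (b : E -> K) :=
  [/\ compact [set: K], hausdorff_space K, embedding b, dense (range b) &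
      forall (Y : topologicalType), compact [set: Y] -> hausdorff_space Y ->
        forall f : E -> Y, continuous f ->
          exists g : K -> Y, continuous g /\ g \o b = f].

Definition isotone (T : Type) (R : realType) (le : T -> T -> Prop) (f : T -> R) :=
  forall x y, le x y -> f x <= f y.

Definition F_iso (R : realType) (E : topologicalType) (le : E -> E -> Prop)
  (f : E -> R) :=
  [/\ continuous f, (forall x, 0 <= f x <= 1) & isotone le f].

(* the preorder <=_beta on K: (x,y) lies in G_{f~} for every f in F, where
   f~ is the (unique) continuous extension of f o b^-1 to K, i.e. the
   continuous g : K -> R with g o b = f. *)
Definition le_beta (R : realType) (E K : topologicalType) (b : E -> K)
  (le : E -> E -> Prop) (x y : K) :=
  forall f : E -> R, F_iso le f ->
    forall g : K -> R, continuous g -> g \o b = f -> g x <= g y.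

From HB Require Import structures.
From mathcomp Require Import all_boot all_order all_algebra.
From mathcomp Require Import all_classical all_reals all_analysis.
From mathcomp Require Import lra.

Set Implicit Arguments.
Unset Strict Implicit.
Unset Printing Implicit Defensive.
Import Order.TTheory GRing.Theory Num.Theory numFieldNormedType.Exports.
Local Open Scope classical_set_scope.
Local Open Scope ring_scope.

(* Only the compactification side is used: K is compact Hausdorff, hence
   completely regular, so Urysohn functions on K separate any two distinct
   points; pulled back along b they are continuous [0,1]-valued maps on E,
   trivially isotone for the discrete preorder, so [le_beta] is equality.
   For the indiscrete preorder an isotone f satisfies f u <= f v for all u, v,
   and density of b E propagates this to every continuous extension g. *)

Lemma compact_hausdorff_separator (R : realType) (K : topologicalType) :
  compact [set: K] -> hausdorff_space K -> forall x y : K, x <> y ->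
  exists f : K -> R, [/\ continuous f, (forall z, 0 <= f z <= 1),
                         f x = 1 & f y = 0].
Proof.
move=> cK hK x y xy.
have cr : completely_regular_space K.
  apply: (@normal_completely_regular R); first exact: compact_normal.
  exact: hausdorff_accessible.
have := cr y [set x] (accessible_closed_set1 (hausdorff_accessible hK) (x:=x)).
move=> /(_ (fun e => xy (esym e))) /(@uniform_separatorP _ R).
case=> f [cf f01 f0 f1]; exists f; split => //.
- by move=> z; have /= := f01 (f z) (ex_intro2 _ _ z I erefl); rewrite in_itv.
- by apply: f1; exists x.
- by apply: f0; exists y.
Qed.

Lemma dense_range_le (R : realType) (E K : topologicalType) (b : E -> K)
    (g : K -> R) : dense (range b) -> continuous g ->
  (forall u v, g (b u) <= g (b v)) -> forall x y, g x <= g y.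
Proof.
move=> dK cg gb x y; rewrite leNgt; apply/negP => yx.
pose c := (g x + g y) / 2.
have [z1 [/= cgu [u _ bu]]] : (g @^-1` [set z | c < z]) `&` range b !=set0.
  apply: dK; first by exists x => /=; rewrite /c; lra.
  by apply: open_comp => [z _|]; [exact: cg | exact: open_gt].
have [z2 [/= gvc [v _ bv]]] : (g @^-1` [set z | z < c]) `&` range b !=set0.
  apply: dK; first by exists y => /=; rewrite /c; lra.
  by apply: open_comp => [z _|]; [exact: cg | exact: open_lt].
by subst; have := gb u v; lra.
Qed.

Lemma le_beta_refl (R : realType) (E K : topologicalType) (b : E -> K)
    (le : E -> E -> Prop) (x : K) : le_beta R b le x x.
Proof. by move=> f _ g _ _. Qed.

Lemma le_beta_discrete_eq (R : realType) (E K : topologicalType) (b : E -> K) :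
  compact [set: K] -> hausdorff_space K -> continuous b ->
  forall x y : K, le_beta R b (fun u v => u = v) x y -> x = y.
Proof.
move=> cK hK cb x y xy; apply: contrapT => /(compact_hausdorff_separator R cK hK).
case=> f [cf f01 fx fy].
have iso_fb : F_iso (fun u v => u = v) (f \o b).
  split=> [e|e|u v ->] //; last exact: f01.
  by apply: continuous_comp; [exact: cb | exact: cf].
by have := xy _ iso_fb f cf erefl; rewrite fx fy ler10.
Qed.

Lemma le_beta_indiscrete (R : realType) (E K : topologicalType) (b : E -> K) :
  dense (range b) -> forall x y : K, le_beta R b (fun _ _ => True) x y.
Proof.
move=> dK x y f [_ _ fiso] g cg gb.
apply: (dense_range_le dK cg) => u v.
by move: (fiso u v I); rewrite -gb.
Qed.

Theorem mainTheorem8 (R : realType) (E K : topologicalType) (b : E -> K) :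
  hausdorff_space E -> tychonoff_sp R E -> stone_cech b ->
  (forall x y : K, @le_beta R E K b (fun u v => u = v) x y <-> x = y) /\
  (forall x y : K, @le_beta R E K b (fun _ _ => True) x y).
Proof.
move=> _ _ [cK hK [cb _ _] dK _]; split; last exact: le_beta_indiscrete.
move=> x y; split; first exact: le_beta_discrete_eq.
by move=> <-; exact: le_beta_refl.
Qed.
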